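(* Let $p,q$ be odd primes with $q-p=2$, and let $D=D_1\cdots D_n$ with $D_1,\dots,D_n$ distinct primes, $2\nmid D$, $p\nmid D$, $q\nmid D$. Let $E=E_{+}: y^2=x(x+pD)(x+qD)$ with the $2$-isogeny $\varphi:E\to E'$, $E': y^2=x^3-2(p+q)Dx^2+4D^2x$. For each $i\in\{1,\dots,n\}$ put $$\Pi_i^{+}(D)=\Big(1-\big(\tfrac{-1}{D_i}\big)\Big)+\Big(1-\big(\tfrac{p}{D_i}\big)\Big)+\Big(1-\big(\tfrac{q}{D_i}\big)\Big)+\sum_{j=1,\,j\neq i}^{n}\Big(1-\big(\tfrac{D_j}{D_i}\big)\Big),$$ and $\rho^{+}(D)=\sum_{i=1}^{n}\Big[\frac{1}{1+\Pi_i^{+}(D)}\Big]$. Then: (1) There exists a subset $T\subset\{D_1,\dots,D_n\}$ with $\#T=\rho^{+}(D)$ such that $S^{(\varphi)}(E/\mathbb{Q})\supset\langle T \bmod \mathbb{Q}^{\star 2}\rangle\cong(\mathbb{Z}/2\mathbb{Z})^{\rho^{+}(D)}$. In particular $\dim_2 S^{(\varphi)}(E/\mathbb{Q})\ge\rho^{+}(D)$. (2) If $p\equiv 7 \pmod 8$ and $D_i\equiv 1,7\pmod 8$ for all $1\le i\le n$, then $\dim_2 S^{(\varphi)}(E/\mathbb{Q})\ge\rho^{+}(D)+1$ and $S^{(\varphi)}(E/\mathbb{Q})\supset\langle T\cup\{2\}\bmod\mathbb{Q}^{\star 2}\rangle\cong(\mathbb{Z}/2\mathbb{Z})^{\rho^{+}(D)+1}$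 for some subset $T\subset\{D_1,\dots,D_n\}$ with $\#T=\rho^{+}(D)$.
   Context: $(\frac{\cdot}{\cdot})$ is the Legendre symbol and $[x]$ the greatest integer $\le x$. The isogeny is $\varphi(x,y)=(y^2/x^2,\ y(pqD^2-x^2)/x^2)$ with kernel $\{O,(0,0)\}$. The $\varphi$-Selmer group $S^{(\varphi)}(E/\mathbb{Q})$ is viewed as a subgroup of $\mathbb{Q}^\star/\mathbb{Q}^{\star 2}$: with $S=\{\infty,2,p,q,D_1,\dots,D_n\}$ and $\mathbb{Q}(S,2)=\langle -1,2,p,q,D_1,\dots,D_n\rangle\subset\mathbb{Q}^\star/\mathbb{Q}^{\star 2}$, it equals the set of $d\in\mathbb{Q}(S,2)$ (represented by squarefree integers) such that the curve $C_d: dw^2=d^2-2(p+q)Dd z^2+4D^2z^4$ has a point over $\mathbb{Q}_v$ for every $v\in S$. $\dim_2$ denotes dimension over $\mathbb{F}_2$. *)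

From HB Require Import structures.
From mathcomp Require Import all_boot all_order all_algebra.
From Stdlib Require Rdefinitions.
From mathcomp Require Import Rstruct.
Set Implicit Arguments. Unset Strict Implicit. Unset Printing Implicit Defensive.
Import Order.TTheory GRing.Theory Num.Theory.
Local Open Scope ring_scope.

Definition legendre (a : int) (P : nat) : int :=
  if (a \in dvdz P%:Z) then 0
  else if [exists x : 'I_P, ((x%:Z ^+ 2 - a) \in dvdz P%:Z)] then 1 else -1.

Definition prodD (Ds : seq nat) : nat := (\prod_(l <- Ds) l)%N.

Definition PiPlus (p q : nat) (Ds : seq nat) (i : 'I_(size Ds)) : int :=
  let Di := nth 0%N Ds i in
  (1 - legendre (-1) Di) + (1 - legendre p%:Z Di) + (1 - legendre q%:Z Di)
  + \sum_(j < size Ds | j != i) (1 - legendre (nth 0%N Ds j)%:Z Di).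

Definition rhoPlus (p q : nat) (Ds : seq nat) : int :=
  \sum_(i < size Ds) Num.floor ((1 + (@PiPlus p q Ds i)%:~R)^-1 : rat).

(* The quartic on the right of C_d, homogenised with weights (1,1,2):
   d^2 Z0^4 - 2(p+q) D d Z0^2 Z^2 + 4 D^2 Z^4. *)
Definition quarticC {R : comPzRingType} (p q D : nat) (d : int) (z0 z : R) : R :=
  d%:~R ^+ 2 * z0 ^+ 4 - 2%:R * (p + q)%:R * D%:R * d%:~R * z0 ^+ 2 * z ^+ 2
  + 4%:R * D%:R ^+ 2 * z ^+ 4.

(* C_d has a real point (on its smooth projective model in the weighted
   projective plane P(1,1,2) with coordinates (Z0 : Z : W)). *)
Definition real_solvable (p q D : nat) (d : int) : Prop :=
  exists z0 z w : Rdefinitions.R, (z0 != 0 \/ z != 0) /\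
    d%:~R * w ^+ 2 = quarticC p q D d z0 z.

(* C_d has a Q_l point, l prime: equivalently (compactness of Z_l) for every
   k there is an integral solution modulo l^k with (Z0, Z) primitive. *)
Definition ladic_solvable (l : nat) (p q D : nat) (d : int) : Prop :=
  forall k : nat, exists z0 z w : int,
    ~~ ((z0 \in dvdz l%:Z) && (z \in dvdz l%:Z)) /\
    ((d * w ^+ 2 - quarticC p q D d z0 z) \in dvdz (expn l k)%:Z).

Definition squarefree (n : nat) : bool :=
  (0 < n)%N && all (fun l => (logn l n <= 1)%N) (primes n).

Definition Sfin (p q : nat) (Ds : seq nat) : seq nat := [:: 2%N, p, q & Ds].

(* d (a squarefree integer) represents an element of Q(S,2) *)
Definition in_QS2 (p q : nat) (Ds : seq nat) (d : int) : bool :=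
  (d != 0) && squarefree `|d|%N && all (fun l => l \in Sfin p q Ds) (primes `|d|%N).

(* phi-Selmer group S^(phi)(E/Q), as a set of squarefree integers *)
Definition in_selmer (p q : nat) (Ds : seq nat) (d : int) : Prop :=
  in_QS2 p q Ds d /\
  real_solvable p q (prodD Ds) d /\
  (forall l, l \in Sfin p q Ds -> ladic_solvable l p q (prodD Ds) d).

From mathcomp Require Import all_boot all_order all_algebra.
From mathcomp Require Import finfield zify ring.
From Stdlib Require Rdefinitions.
From mathcomp Require Import Rstruct.
Set Implicit Arguments. Unset Strict Implicit. Unset Printing Implicit Defensive.
Import Order.TTheory GRing.Theory Num.Theory.
Local Open Scope ring_scope.

(* Let T be the set of the D_i with Pi_i^+(D) = 0, i.e. those modulo which -1, p, q and all
   the other D_j are squares; such D_i are 1 mod 4, so by quadratic reciprocity each of them is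
   in turn a square modulo p, q and the other D_j.  For d the product of a subset U of T (or
   twice it, under the hypotheses of (2)) the curve C_d is locally solvable everywhere:
   - d > 0 gives a real point;
   - at l = p, q or a D_j outside U, d is a square mod l, hence an l-adic square by Hensel,
     and (z0 : z : w) = (1 : 0 : sqrt d) is a point;
   - at l in U, writing m for the product of U, sqrt p, sqrt q and sqrt (D/m) exist l-adically,
     and since (sqrt q - sqrt p)(sqrt q + sqrt p) = 2 the quartic vanishes at
     z0 = sqrt (D/m) (sqrt p + sqrt q), z = sqrt (d/m);
   - at l = 2, the point with z0 = z = 1 works after a computation modulo 8.
   Quadratic reciprocity and the supplementary laws are proved from Euler's criterion, Gauss's
   lemma and Eisenstein's lattice-point count. *)

(** * Squares modulo n and n-adic squares *)

Definition sqr_mod (n : nat) (a : int) : Prop := exists x : int, (n%:Z %| x ^+ 2 - a)%Z.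

Definition sqr_ladic (l : nat) (a : int) : Prop := forall k, sqr_mod (l ^ k) a.

Lemma Zp_nat_eq0 (n m : nat) : (1 < n)%N -> ((m%:R : 'Z_n) == 0) = (n %| m)%N.
Proof. by move=> n_gt1; rewrite -val_eqE /= val_Zp_nat. Qed.

Lemma Zp_int_eq0 (n : nat) (z : int) : (1 < n)%N -> ((z%:~R : 'Z_n) == 0) = (n%:Z %| z)%Z.
Proof.
move=> n_gt1; case: z => m; first by rewrite /= Zp_nat_eq0 // dvdzE.
by rewrite NegzE mulrNz oppr_eq0 Zp_nat_eq0 // dvdzE /= abszN.
Qed.

Lemma Fp_int_eq0 (l : nat) (z : int) : prime l -> ((z%:~R : 'F_l) == 0) = (l%:Z %| z)%Z.
Proof. by move=> pr_l; rewrite Zp_int_eq0 ?pdiv_id ?prime_gt1. Qed.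

Lemma Fp_nat_eq0 (l m : nat) : prime l -> ((m%:R : 'F_l) == 0) = (l %| m)%N.
Proof. by move=> pr_l; rewrite Zp_nat_eq0 ?pdiv_id ?prime_gt1. Qed.

Lemma Fp_nat_inj (l i j : nat) : prime l -> (i < l)%N -> (j < l)%N ->
  (i%:R : 'F_l) = j%:R -> i = j.
Proof. by move=> pr_l il jl /(congr1 val); rewrite /= !val_Fp_nat // !modn_small. Qed.

Lemma PoszX (n k : nat) : (n ^ k)%N%:Z = n%:Z ^+ k.
Proof. by rewrite -!natz natrX. Qed.

Lemma intr_Zp (n : nat) (x : 'Z_n) : ((nat_of_ord x)%:Z)%:~R = x.
Proof. exact: natr_Zp. Qed.

Lemma sqr_mod_Zp (n : nat) (a : int) : (1 < n)%N ->
  sqr_mod n a <-> exists x : 'Z_n, x ^+ 2 = a%:~R.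
Proof.
move=> n_gt1; split=> [[x nx]|[x x2]].
  by exists x%:~R; apply/eqP; rewrite -subr_eq0 -rmorphXn -rmorphB Zp_int_eq0.
exists (nat_of_ord x)%:Z.
by rewrite -Zp_int_eq0 // rmorphB rmorphXn /= intr_Zp x2 subrr.
Qed.

Lemma sqr_mod_Fp (l : nat) (a : int) : prime l ->
  sqr_mod l a <-> exists x : 'F_l, x ^+ 2 = a%:~R.
Proof. by move=> pr_l; rewrite -{1}(pdiv_id pr_l); apply: sqr_mod_Zp; rewrite pdiv_id ?prime_gt1. Qed.

Lemma sqr_mod1 (n : nat) : sqr_mod n 1.
Proof. by exists 1; rewrite subrr dvdz0. Qed.

Lemma sqr_modM (n : nat) (a b : int) : sqr_mod n a -> sqr_mod n b -> sqr_mod n (a * b).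
Proof.
case=> x /dvdzP [u xu] [y /dvdzP [v yv]]; exists (x * y); apply/dvdzP.
exists (u * y ^+ 2 + a * v).
have -> : (x * y) ^+ 2 - a * b = (x ^+ 2 - a) * y ^+ 2 + a * (y ^+ 2 - b) by ring.
by rewrite xu yv; ring.
Qed.

Lemma sqr_mod_prod (n : nat) (U : seq nat) : (forall x, x \in U -> sqr_mod n x%:Z) ->
  sqr_mod n (\prod_(x <- U) x)%N%:Z.
Proof.
elim: U => [|x U IH] sqrU; first by rewrite big_nil; apply: sqr_mod1.
rewrite big_cons PoszM; apply: sqr_modM; first by apply: sqrU; rewrite mem_head.
by apply: IH => y yU; apply: sqrU; rewrite in_cons yU orbT.
Qed.

Lemma prime_expn_gt1 (l k : nat) : prime l -> (0 < k)%N -> (1 < l ^ k)%N.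
Proof. by move=> pr_l k_gt0; rewrite -{1}(expn0 l) ltn_exp2l ?prime_gt1. Qed.

Lemma sqr_ladic_Zp (l : nat) (a : int) (k : nat) : prime l -> (0 < k)%N -> sqr_ladic l a ->
  exists x : 'Z_(l ^ k), x ^+ 2 = a%:~R.
Proof. by move=> pr_l k_gt0 /(_ k) /(sqr_mod_Zp _ (prime_expn_gt1 pr_l k_gt0)). Qed.

Lemma sqr_ladic_Zp_coprime (l : nat) (a : int) (k : nat) : prime l -> (0 < k)%N ->
  ~~ (l%:Z %| a)%Z -> sqr_ladic l a ->
  exists x : int, ~~ (l%:Z %| x)%Z /\ (x%:~R : 'Z_(l ^ k)) ^+ 2 = a%:~R.
Proof.
move=> pr_l k_gt0 la /(_ k) [x ax]; exists x; split.
  apply: contra la => lx; have -> : a = x ^+ 2 - (x ^+ 2 - a) by ring.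
  apply: rpredB; first by rewrite expr2 dvdz_mull.
  by apply: dvdz_trans ax; rewrite dvdzE /= dvdn_exp.
by apply/eqP; rewrite -subr_eq0 -rmorphXn -rmorphB Zp_int_eq0 ?prime_expn_gt1.
Qed.

(* Hensel lifting: [x + t l^(k+1)] with [2 x t = -(x^2 - a)/l^(k+1) (mod l)]. *)
Lemma sqr_ladic_odd (l : nat) (a : int) : prime l -> odd l -> ~~ (l%:Z %| a)%Z ->
  sqr_mod l a -> sqr_ladic l a.
Proof.
move=> pr_l odd_l la [x0 hx0].
suff lift k : sqr_mod (l ^ k.+1) a.
  by case=> [|k]; [exists 0; rewrite expn0 dvd1z | apply: lift].
elim: k => [|k [y /dvdzP [c hc]]]; first by exists x0; rewrite expn1.
have y_neq0 : (y%:~R : 'F_l) != 0.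
  rewrite Fp_int_eq0 //; apply: contra la => ly.
  have -> : a = y ^+ 2 - c * (l ^ k.+1)%N%:Z by rewrite -hc; ring.
  apply: rpredB; first by rewrite expr2 dvdz_mull.
  by rewrite dvdz_mull // PoszX exprS dvdz_mulr.
have two_neq0 : (2%:R : 'F_l) != 0.
  by rewrite Fp_nat_eq0 //; apply: contraL odd_l => /dvdn_leq; have := prime_gt1 pr_l; lia.
pose t : 'F_l := - c%:~R / (2%:R * y%:~R).
have /dvdzP [s hs] : (l%:Z %| c + 2 * y * (nat_of_ord t)%:Z)%Z.
  rewrite -Fp_int_eq0 // rmorphD /= !rmorphM /= (intr_Zp t) /t rmorph_nat.
  by apply/eqP; field; rewrite y_neq0 two_neq0.
exists (y + (nat_of_ord t)%:Z * (l ^ k.+1)%N%:Z).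
apply/dvdzP; exists (s + (nat_of_ord t)%:Z ^+ 2 * (l ^ k)%N%:Z).
rewrite !PoszX in hc hs *.
have -> : (y + (nat_of_ord t)%:Z * l%:Z ^+ k.+1) ^+ 2 - a =
   (y ^+ 2 - a) + (c + 2 * y * (nat_of_ord t)%:Z) * l%:Z ^+ k.+1
   - c * l%:Z ^+ k.+1 + (nat_of_ord t)%:Z ^+ 2 * l%:Z ^+ k.+1 * l%:Z ^+ k.+1 by ring.
by rewrite hc hs !exprS; ring.
Qed.

Lemma sqr_mod_dvd (m n : nat) (a : int) : (m %| n)%N -> sqr_mod n a -> sqr_mod m a.
Proof. by move=> mn [x nx]; exists x; apply: dvdz_trans nx; rewrite dvdzE. Qed.

Lemma F2_cases (x : 'F_2) : x = 0 \/ x = 1.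
Proof. by case: x => -[|[|]] //= ?; [left|right]; apply: val_inj. Qed.

(* Lifting from 2^(k+3) to 2^(k+4) uses [x + 2^(k+2)], whose square differs from x^2 by 2^(k+3) x. *)
Lemma sqr_ladic_2 (a : int) : (8 %| a - 1)%Z -> sqr_ladic 2 a.
Proof.
move=> a8.
suff lift k : sqr_mod (2 ^ k.+3) a by move=> k; apply: sqr_mod_dvd (lift k); apply: dvdn_exp2l; lia.
elim: k => [|k [y /dvdzP [c hc]]]; first by exists 1; rewrite -opprB rpredN expr1n.
have a_odd : (a%:~R : 'F_2) = 1.
  have : ((a - 1)%:~R : 'F_2) == 0 by rewrite Fp_int_eq0 //; exact: dvdz_trans a8.
  by rewrite rmorphB rmorph1 subr_eq0 => /eqP.
have y_odd : (y%:~R : 'F_2) = 1.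
  have : (y%:~R : 'F_2) ^+ 2 = 1.
    rewrite -rmorphXn; have -> : y ^+ 2 = a + c * (2 ^ k.+3)%N%:Z by rewrite -hc; ring.
    rewrite rmorphD rmorphM /= a_odd (_ : ((2 ^ k.+3)%N%:Z)%:~R = 0 :> 'F_2) ?mulr0 ?addr0 //.
    by apply/eqP; rewrite Fp_int_eq0 // dvdzE /= dvdn_exp.
  by case: (F2_cases (y%:~R)) => ->; rewrite ?expr0n.
have [/dvdzP [c' c_even]|c_odd] := boolP (2%:Z %| c)%Z.
  by exists y; apply/dvdzP; exists c'; rewrite hc c_even !PoszX !exprS; ring.
have /dvdzP [s hs] : (2%:Z %| c + y)%Z.
  rewrite -Fp_int_eq0 // rmorphD /= y_odd.
  case: (F2_cases (c%:~R)) => [/eqP|->]; first by rewrite Fp_int_eq0 // (negbTE c_odd).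
  by apply/eqP; apply: (pchar_Fp_0 (isT : prime 2)).
exists (y + (2 ^ k.+2)%N%:Z); apply/dvdzP; exists (s + (2 ^ k)%N%:Z).
rewrite !PoszX in hc *.
have -> : (y + 2%:Z ^+ k.+2) ^+ 2 - a = (y ^+ 2 - a) + 2%:Z ^+ k.+3 * y
   + 2%:Z ^+ k.+2 * 2%:Z ^+ k.+2 by rewrite !exprS; ring.
rewrite hc; have -> : c = s * 2 - y by rewrite -hs; ring.
by rewrite !exprS; ring.
Qed.

(** * Euler's criterion, Gauss's lemma and quadratic reciprocity *)

Lemma Fp_fermat (l : nat) (x : 'F_l) : prime l -> x != 0 -> x ^+ l.-1 = 1.
Proof.
move=> pr_l x_neq0; apply: (mulIf x_neq0); rewrite mul1r -exprSr prednK ?prime_gt0 //.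
by have := expf_card x; rewrite card_Fp.
Qed.

Lemma Fp_neg1_neq1 (l : nat) : prime l -> odd l -> (-1 : 'F_l) != 1.
Proof.
move=> pr_l odd_l; apply/negP => /eqP neg1E.
have : (2%:R : 'F_l) == 0 by rewrite -[2%N]/(1 + 1)%N natrD -{1}neg1E addNr.
by rewrite Fp_nat_eq0 // => /dvdn_leq; have := prime_gt1 pr_l; lia.
Qed.

Lemma Fp_signr_eq1 (l n : nat) : prime l -> odd l -> ((-1 : 'F_l) ^+ n == 1) = ~~ odd n.
Proof.
move=> pr_l odd_l; rewrite -signr_odd; case: (odd n); last by rewrite expr0 eqxx.
by rewrite expr1 (negbTE (Fp_neg1_neq1 pr_l odd_l)).
Qed.

(* If [y^((l-1)/2) = 1] with [y] a non-square, [X^((l-1)/2) - 1] would have the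
   [(l-1)/2] nonzero squares and [y] as roots, one too many. *)
Lemma euler_criterion (l : nat) (y : 'F_l) : prime l -> odd l -> y != 0 ->
  (exists x, x ^+ 2 = y) <-> y ^+ l./2 = 1.
Proof.
move=> pr_l odd_l y_neq0; split=> [[x xy]|y_half].
  have x_neq0 : x != 0 by apply: contraNneq y_neq0 => x0; rewrite -xy x0 expr0n.
  by rewrite -xy -exprM (_ : (2 * l./2)%N = l.-1) ?Fp_fermat //; lia.
have [/existsP [x /eqP xy]|nsq] := boolP [exists x : 'F_l, x ^+ 2 == y]; first by exists x.
exfalso; have half_gt0 : (0 < l./2)%N by have := prime_gt1 pr_l; lia.
pose rs := y :: [seq ((k.+1)%:R : 'F_l) ^+ 2 | k <- iota 0 l./2].
suff : (size rs < (l./2).+1)%N by rewrite /rs /= size_map size_iota ltnn.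
rewrite -(size_XnsubC (R := 'F_l) 1 half_gt0); apply: max_poly_roots.
- by rewrite -size_poly_eq0 size_XnsubC.
- rewrite /= rootE !hornerE y_half subrr eqxx /=.
  apply/allP => z /mapP [k]; rewrite mem_iota add0n => /andP [_ kl] ->.
  rewrite rootE !hornerE -exprM (_ : (2 * l./2)%N = l.-1); last by lia.
  by rewrite Fp_fermat ?subrr // Fp_nat_eq0 //; apply/negP => /dvdn_leq; lia.
- rewrite /= map_inj_in_uniq ?iota_uniq ?andbT.
    apply/mapP => -[k _ ek]; move/negP: nsq; apply; apply/existsP.
    by exists (k.+1%:R); rewrite ek.
  move=> i j; rewrite !mem_iota !add0n => /andP [_ il] /andP [_ jl] /eqP.
  rewrite -subr_eq0 subr_sqr mulf_eq0 => /orP [].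
    have [il' jl'] : (i.+1 < l)%N /\ (j.+1 < l)%N by lia.
    by rewrite subr_eq0 => /eqP /(Fp_nat_inj pr_l il' jl') [].
  by rewrite -natrD Fp_nat_eq0 // => /dvdn_leq; lia.
Qed.

Lemma sqr_mod_euler (l a : nat) : prime l -> odd l -> ~~ (l %| a)%N ->
  sqr_mod l a%:Z <-> (a%:R : 'F_l) ^+ l./2 = 1.
Proof.
move=> pr_l odd_l la; rewrite (sqr_mod_Fp _ pr_l); apply: euler_criterion => //.
by rewrite Fp_nat_eq0.
Qed.

Section GaussLemma.
Variables (a l : nat).

Definition gauss_over (k : nat) : bool := (l./2 < (a * k) %% l)%N.

Definition gauss_residue (k : nat) : nat :=
  if gauss_over k then (l - (a * k) %% l)%N else ((a * k) %% l)%N.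

Definition gauss_count : nat := count gauss_over (iota 1 l./2).

Definition gauss_floor_sum : nat := (\sum_(k <- iota 1 l./2) ((a * k) %/ l))%N.

Hypotheses (pr_l : prime l) (odd_l : odd l) (l_ndvd_a : ~~ (l %| a)%N).

Lemma modn_mul_gt0 (k : nat) : (0 < k < l)%N -> (0 < (a * k) %% l < l)%N.
Proof.
case/andP=> k_gt0 kl; rewrite (ltn_pmod _ (prime_gt0 pr_l)) andbT lt0n.
rewrite -/(dvdn l (a * k)) Euclid_dvdM // negb_or l_ndvd_a /=.
by apply/negP => /(dvdn_leq k_gt0); lia.
Qed.

Lemma perm_gauss_residue : perm_eq (map gauss_residue (iota 1 l./2)) (iota 1 l./2).
Proof.
have mod_lt k : ((a * k) %% l < l)%N by rewrite ltn_pmod ?prime_gt0.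
have res_in k : k \in iota 1 l./2 -> gauss_residue k \in iota 1 l./2.
  rewrite !mem_iota /gauss_residue /gauss_over => /andP [k_gt0 kl].
  have : (0 < (a * k) %% l < l)%N by apply: modn_mul_gt0; lia.
  by move: ((a * k) %% l)%N => r; case: ifP; lia.
have res_uniq : uniq (map gauss_residue (iota 1 l./2)).
  rewrite map_inj_in_uniq ?iota_uniq // => i j; rewrite !mem_iota.
  move=> /andP [i_gt0 il] /andP [j_gt0 jl] res_ij.
  have [eq_ij|sum_ij] : ((a * i) %% l = (a * j) %% l \/ (a * i) %% l + (a * j) %% l = l)%N.
  - move: res_ij (mod_lt i) (mod_lt j); rewrite /gauss_residue /gauss_over.
    by move: ((a * i) %% l)%N ((a * j) %% l)%N => x y; case: ifP => ?; case: ifP => ?; lia.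
  - move/(congr1 (fun n => (n%:R : 'F_l))): eq_ij; rewrite !(Fp_nat_mod pr_l) !natrM.
    move/eqP; rewrite -subr_eq0 -mulrBr mulf_eq0 Fp_nat_eq0 // (negbTE l_ndvd_a) /=.
    by rewrite subr_eq0 => /eqP /(Fp_nat_inj pr_l); apply; lia.
  - move/(congr1 (fun n => (n%:R : 'F_l))): sum_ij; rewrite natrD !(Fp_nat_mod pr_l).
    rewrite -natrD -mulnDr natrM => /eqP; rewrite pchar_Fp_0 // mulf_eq0 !Fp_nat_eq0 //.
    by rewrite (negbTE l_ndvd_a) /= => /dvdn_leq; lia.
have sub : {subset map gauss_residue (iota 1 l./2) <= iota 1 l./2}.
  by move=> k /mapP [x xin ->]; apply: res_in.
have [_ eq_res] := uniq_min_size res_uniq sub (eq_leq (esym (size_map _ _))).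
exact: uniq_perm res_uniq (iota_uniq _ _) eq_res.
Qed.

Lemma sum_nat_of_bool (T : Type) (s : seq T) (P : pred T) :
  (\sum_(k <- s) (P k : nat))%N = count P s.
Proof. by elim: s => [|x s IH]; rewrite ?big_nil // big_cons IH. Qed.

Lemma prodrMl_seq (R : comNzRingType) (T : Type) (s : seq T) (c : R) (F : T -> R) :
  \prod_(k <- s) (c * F k) = c ^+ size s * \prod_(k <- s) F k.
Proof.
elim: s => [|x s IH]; first by rewrite !big_nil mulr1.
by rewrite !big_cons IH /= exprS -!mulrA; congr (_ * _); rewrite mulrCA.
Qed.

(* Both sides of [prod (a k) = a^((l-1)/2) prod k] are computed with [a k = +-(absolute least residue)]. *)
Lemma gauss_lemma : (a%:R : 'F_l) ^+ l./2 = (-1) ^+ gauss_count.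
Proof.
have prod_a : \prod_(k <- iota 1 l./2) ((a * k)%:R : 'F_l) =
              a%:R ^+ l./2 * \prod_(k <- iota 1 l./2) (k%:R : 'F_l).
  by under eq_bigr do rewrite natrM; rewrite prodrMl_seq size_iota.
have prod_res : \prod_(k <- iota 1 l./2) ((a * k)%:R : 'F_l) =
              (-1) ^+ gauss_count * \prod_(k <- iota 1 l./2) (k%:R : 'F_l).
  rewrite (eq_big_seq (fun k => (-1) ^+ gauss_over k * ((gauss_residue k)%:R : 'F_l))).
    rewrite big_split /= prodrXr sum_nat_of_bool; congr (_ * _).
    by rewrite -(big_map gauss_residue xpredT (fun k => (k%:R : 'F_l))) (perm_big _ perm_gauss_residue).
  move=> k _; rewrite -[((a * k)%:R : 'F_l)](Fp_nat_mod pr_l) /gauss_residue.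
  have mod_le : ((a * k) %% l <= l)%N by rewrite ltnW ?ltn_pmod ?prime_gt0.
  case: (gauss_over k); last by rewrite expr0 mul1r.
  by rewrite (natrB _ mod_le) (pchar_Fp_0 pr_l) expr1 sub0r mulN1r opprK.
have prod_neq0 : \prod_(k <- iota 1 l./2) (k%:R : 'F_l) != 0.
  rewrite prodf_seq_neq0; apply/allP => k; rewrite mem_iota => /andP [k_gt0 kl] /=.
  by rewrite Fp_nat_eq0 //; apply/negP => /(dvdn_leq k_gt0); lia.
by apply: (mulIf prod_neq0); rewrite -prod_a -prod_res.
Qed.

Lemma odd_sum_xor (T : Type) (s : seq T) (F G : T -> nat) (P : pred T) :
  (forall k, odd (F k) = odd (G k) (+) P k) ->
  odd (\sum_(k <- s) F k) = odd (\sum_(k <- s) G k) (+) odd (count P s).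
Proof.
move=> FG; elim: s => [|x s IH]; first by rewrite !big_nil.
rewrite !big_cons /= !oddD FG IH.
by case: (odd (G x)); case: (P x); case: (odd (\sum_(k <- s) G k)); case: (odd (count P s)).
Qed.

(* Reduce [sum a k = l (floor sum) + sum (a k mod l)] modulo 2. *)
Lemma odd_gauss_count : odd a -> odd gauss_count = odd gauss_floor_sum.
Proof.
move=> odd_a.
have sum_odd : odd (\sum_(k <- iota 1 l./2) a * k)%N = odd (\sum_(k <- iota 1 l./2) k)%N.
  by rewrite -big_distrr oddM odd_a.
have sum_div : (\sum_(k <- iota 1 l./2) a * k =
     gauss_floor_sum * l + \sum_(k <- iota 1 l./2) ((a * k) %% l))%N.
  by rewrite /gauss_floor_sum big_distrl -big_split; apply: eq_bigr => k _; exact: divn_eq.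
have sum_mod : odd (\sum_(k <- iota 1 l./2) ((a * k) %% l))%N =
          odd (\sum_(k <- iota 1 l./2) gauss_residue k)%N (+) odd gauss_count.
  apply: odd_sum_xor => k; rewrite /gauss_residue.
  have mod_le : ((a * k) %% l <= l)%N by rewrite ltnW ?ltn_pmod ?prime_gt0.
  case: (gauss_over k); last by rewrite addbF.
  by rewrite (oddB mod_le) odd_l; case: (odd _).
have sum_res : (\sum_(k <- iota 1 l./2) gauss_residue k = \sum_(k <- iota 1 l./2) k)%N.
  by rewrite -(big_map gauss_residue xpredT (fun k => k)) (perm_big _ perm_gauss_residue).
move: sum_odd; rewrite sum_div oddD oddM odd_l andbT sum_mod sum_res.
by case: (odd gauss_count); case: (odd gauss_floor_sum); case: (odd _).
Qed.

End GaussLemma.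

Lemma count_iota_le (c n : nat) : count (fun j => (j <= c)%N) (iota 1 n) = minn n c.
Proof.
elim: n => [|n IH]; first by rewrite min0n.
rewrite -[n.+1]addn1 iotaD count_cat IH /= add1n addn0.
by case: (leqP n.+1 c) => /=; lia.
Qed.

Lemma muln_neq_prime (a b j k : nat) : prime a -> prime b -> a != b -> (0 < k < a)%N ->
  (a * j != b * k)%N.
Proof.
move=> pr_a pr_b ab /andP [k_gt0 ka]; apply/eqP => ajE.
have : (a %| b * k)%N by rewrite -ajE dvdn_mulr.
by rewrite Euclid_dvdM // dvdn_prime2 // (negbTE ab) /= => /(dvdn_leq k_gt0); lia.
Qed.

Lemma divn_count (a b k h : nat) : prime a -> prime b -> a != b -> (0 < k < a)%N ->
  ((b * k) %/ a <= h)%N -> ((b * k) %/ a)%N = count (fun j => a * j < b * k)%N (iota 1 h).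
Proof.
move=> pr_a pr_b ab ka div_le.
rewrite (@eq_in_count _ _ (fun j => j <= (b * k) %/ a)%N).
  by rewrite count_iota_le; apply/esym/minn_idPr.
move=> j _ /=; rewrite leq_divRL ?prime_gt0 // ltn_neqAle mulnC.
by rewrite [(j * a)%N]mulnC (muln_neq_prime j pr_a pr_b ab ka).
Qed.

Lemma sum_nat_const_seq (T : Type) (s : seq T) (c : nat) : (\sum_(k <- s) c)%N = (size s * c)%N.
Proof. by rewrite big_const_seq count_predT iter_addn_0 mulnC. Qed.

(* Eisenstein: both floor sums count the lattice points of the rectangle
   [1, a/2] x [1, b/2] on either side of the diagonal [a y = b x]. *)
Lemma gauss_floor_sum_sym (a b : nat) : prime a -> prime b -> odd a -> odd b -> a != b ->
  (gauss_floor_sum b a + gauss_floor_sum a b)%N = (a./2 * b./2)%N.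
Proof.
move=> pr_a pr_b odd_a odd_b ab.
have sum_ba : gauss_floor_sum b a =
    (\sum_(k <- iota 1 a./2) \sum_(j <- iota 1 b./2) (a * j < b * k : nat))%N.
  apply: eq_big_seq => k; rewrite mem_iota => /andP [k_gt0 k_le].
  rewrite sum_nat_of_bool; apply: divn_count => //; first by apply/andP; split; lia.
  by rewrite -ltnS ltn_divLR ?prime_gt0 //; nia.
have sum_ab : gauss_floor_sum a b =
    (\sum_(j <- iota 1 b./2) \sum_(k <- iota 1 a./2) (b * k < a * j : nat))%N.
  apply: eq_big_seq => j; rewrite mem_iota => /andP [j_gt0 j_le].
  rewrite sum_nat_of_bool; apply: divn_count => //; first by rewrite eq_sym.
    by apply/andP; split; lia.
  by rewrite -ltnS ltn_divLR ?prime_gt0 //; nia.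
rewrite sum_ba sum_ab (exchange_big _ (iota 1 b./2)) -big_split /=.
rewrite (eq_big_seq (fun _ => b./2)) ?sum_nat_const_seq ?size_iota //.
move=> k; rewrite mem_iota => /andP [k_gt0 k_le].
rewrite -big_split /= (eq_big_seq (fun _ => 1%N)) ?sum_nat_const_seq ?size_iota ?muln1 //.
move=> j _; have ka : (0 < k < a)%N by apply/andP; split; lia.
by have := muln_neq_prime j pr_a pr_b ab ka; case: ltngtP.
Qed.

Lemma sqr_mod_reciprocity (a b : nat) : prime a -> prime b -> odd a -> odd b -> a != b ->
  (a %% 4 = 1)%N -> sqr_mod a b%:Z -> sqr_mod b a%:Z.
Proof.
move=> pr_a pr_b odd_a odd_b ab a4.
have a_ndvd_b : ~~ (a %| b)%N by rewrite dvdn_prime2.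
have b_ndvd_a : ~~ (b %| a)%N by rewrite dvdn_prime2 // eq_sym.
rewrite !sqr_mod_euler // !gauss_lemma //; move/eqP; rewrite !Fp_signr_eq1 //.
rewrite odd_gauss_count // => even_ba; apply/eqP; rewrite Fp_signr_eq1 // odd_gauss_count //.
have even_half : ~~ odd a./2 by lia.
move: (congr1 odd (gauss_floor_sum_sym pr_a pr_b odd_a odd_b ab)).
by rewrite oddD oddM (negbTE even_half) (negbTE even_ba) /= => ->.
Qed.

Lemma sqr_mod_neg1 (l : nat) : prime l -> odd l -> sqr_mod l (-1) -> (l %% 4 = 1)%N.
Proof.
move=> pr_l odd_l /(sqr_mod_Fp _ pr_l) [x x2].
have x_neq0 : x != 0.
  apply: contra_eq_neq x2 => ->; rewrite expr0n /= rmorphN rmorph1 eq_sym.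
  by rewrite oppr_eq0 oner_eq0.
have := Fp_fermat pr_l x_neq0; rewrite (_ : l.-1 = (2 * l./2)%N); last first.
  by lia.
rewrite exprM x2 rmorphN rmorph1 => /eqP; rewrite Fp_signr_eq1 //.
by lia.
Qed.

Lemma count_iota_gt (c n : nat) : count (fun j => (c < j)%N) (iota 1 n) = (n - c)%N.
Proof.
have := count_predC (fun j => (j <= c)%N) (iota 1 n).
rewrite count_iota_le size_iota (@eq_count _ _ (fun j => (c < j)%N)); first by lia.
by move=> j /=; rewrite ltnNge.
Qed.

(* [2 k mod l > l/2] exactly for [l/4 < k <= l/2]. *)
Lemma sqr_mod_two (l : nat) : prime l -> (l %% 8 = 1 \/ l %% 8 = 7)%N -> sqr_mod l 2.
Proof.
move=> pr_l l8; have odd_l : odd l by lia.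
have l_ndvd2 : ~~ (l %| 2)%N by apply/negP => /dvdn_leq; have := prime_gt1 pr_l; lia.
have count2 : gauss_count 2 l = (l./2 - l./2./2)%N.
  rewrite /gauss_count -count_iota_gt; apply: eq_in_count => k.
  rewrite mem_iota /gauss_over => /andP [k_gt0 k_le]; rewrite modn_small; last by lia.
  by lia.
apply/(sqr_mod_euler pr_l odd_l l_ndvd2); rewrite gauss_lemma //; apply/eqP.
by rewrite Fp_signr_eq1 // count2; lia.
Qed.

Lemma legendre_le1 (a : int) (l : nat) : legendre a l <= 1.
Proof. by rewrite /legendre; case: ifP => _ //; case: ifP. Qed.

Lemma legendre_eq1 (a : int) (l : nat) : legendre a l = 1 -> ~~ (l%:Z %| a)%Z /\ sqr_mod l a.
Proof.
rewrite /legendre; case: ifP => // la; case: ifP => // /existsP [x lx] _.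
by split; [apply/negbT | exists (nat_of_ord x)%:Z].
Qed.

(** * Local points on the curve [C_d] *)

Lemma quarticC10 (R : comNzRingType) (p q D : nat) (d : int) :
  quarticC p q D d (1 : R) 0 = d%:~R ^+ 2.
Proof. by rewrite /quarticC expr1n !expr0n /= !mulr0 !mulr1 subr0 addr0. Qed.

Lemma real_solvable_pos (p q D : nat) (d : int) : 0 < d -> real_solvable p q D d.
Proof.
move=> d_gt0; exists 1, 0, (Num.sqrt (d%:~R : Rdefinitions.R)); split; first by left; apply: oner_neq0.
by rewrite quarticC10 sqr_sqrtr ?ler0z ?ltW // expr2.
Qed.

Lemma quarticC_int (R : comNzRingType) (p q D : nat) (d z0 z : int) :
  ((quarticC p q D d z0 z)%:~R : R) = quarticC p q D d z0%:~R z%:~R.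
Proof. by rewrite /quarticC !(rmorphD, rmorphN, rmorphM, rmorphXn) /= !intz !rmorph_nat. Qed.

Lemma ladic_solvable_Zp (l p q D : nat) (d : int) : prime l ->
  (forall k, (0 < k)%N -> exists z0 z : int,
      ~~ ((l%:Z %| z0)%Z && (l%:Z %| z)%Z) /\
      exists w : 'Z_(l ^ k), d%:~R * w ^+ 2 = quarticC p q D d z0%:~R z%:~R) ->
  ladic_solvable l p q D d.
Proof.
move=> pr_l sol [|k].
  exists 1, 0, 0; rewrite expn0 dvd1z dvdz0 andbT dvdz1; split=> //.
  by have := prime_gt1 pr_l; case: (l) => [|[|]].
have [z0 [z [prim [w dw]]]] := sol k.+1 isT.
exists z0, z, (nat_of_ord w)%:Z; split=> //.
rewrite -Zp_int_eq0 ?prime_expn_gt1 // rmorphB rmorphM rmorphXn /=.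
by rewrite intr_Zp quarticC_int dw subrr.
Qed.

Lemma ladic_solvable_sqr (l p q D : nat) (d : int) : prime l -> sqr_ladic l d ->
  ladic_solvable l p q D d.
Proof.
move=> pr_l d_sqr; apply: ladic_solvable_Zp => // k k_gt0.
exists 1, 0; split.
  by rewrite dvdz0 andbT dvdz1; have := prime_gt1 pr_l; case: (l) => [|[|]].
have [w w2] := sqr_ladic_Zp pr_l k_gt0 d_sqr.
by exists w; rewrite rmorph1 rmorph0 quarticC10 w2 expr2.
Qed.

(* The root exists because [(sqrt q - sqrt p)(sqrt q + sqrt p) = 2]. *)
Lemma quarticC_twin_root (R : comNzRingType) (p q m e c : nat) (A B E S : R) :
  q = (p + 2)%N -> A ^+ 2 = p%:R -> B ^+ 2 = q%:R -> E ^+ 2 = e%:R -> S ^+ 2 = c%:R ->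
  quarticC p q (m * e) (c * m)%N%:Z (E * (A + B)) S = 0.
Proof.
move=> qE A2 B2 E2 S2.
have four : (4%:R : R) = (B ^+ 2 - A ^+ 2) ^+ 2 by rewrite A2 B2 qE natrD; ring.
rewrite /quarticC four PoszM rmorphM /= natrD !natrM -!pmulrn -A2 -B2 -E2 -S2; ring.
Qed.

Lemma ladic_solvable_twin (l p q m e c : nat) : prime l -> q = (p + 2)%N -> ~~ (l %| c)%N ->
  sqr_ladic l p%:Z -> sqr_ladic l q%:Z -> sqr_ladic l e%:Z -> sqr_ladic l c%:Z ->
  ladic_solvable l p q (m * e) (c * m)%N%:Z.
Proof.
move=> pr_l qE lc p_sqr q_sqr e_sqr c_sqr; apply: ladic_solvable_Zp => // k k_gt0.
have [A A2] := sqr_ladic_Zp pr_l k_gt0 p_sqr.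
have [B B2] := sqr_ladic_Zp pr_l k_gt0 q_sqr.
have [E E2] := sqr_ladic_Zp pr_l k_gt0 e_sqr.
have [s [ls s2]] := sqr_ladic_Zp_coprime (a := c%:Z) pr_l k_gt0 lc c_sqr.
exists (nat_of_ord (E * (A + B)))%:Z, s; split; first by rewrite negb_and ls orbT.
by exists 0; rewrite intr_Zp (quarticC_twin_root _ qE A2 B2 E2 s2) expr0n /= mulr0.
Qed.

(* For [m = 5 mod 8] take [z0 = z = 1]: [m * quarticC = 1 (mod 8)] is a 2-adic square [y^2],
   and [w = y / m]. *)
Lemma two_adic_solvable_5mod8 (p q D m : nat) : odd p -> q = (p + 2)%N -> odd D ->
  (m %% 8 = 5)%N -> ladic_solvable 2 p q D m%:Z.
Proof.
move=> odd_p qE odd_D m8.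
pose a := (m %/ 8)%N; pose b := D./2; pose c := p./2.
have mE : m%:Z = 8 * a%:Z + 5 by rewrite /a; lia.
have DE : D%:Z = 2 * b%:Z + 1 by rewrite /b; lia.
have pE : p%:Z = 2 * c%:Z + 1 by rewrite /c; lia.
pose Q := quarticC (R := int) p q D m%:Z 1 1.
have mQ : (8 %| m%:Z * Q - 1)%Z.
  apply/dvdzP; exists (64 * a%:Z ^+ 3 + 120 * a%:Z ^+ 2 + 79 * a%:Z + 18
     + 2 * (8 * a%:Z + 5) * b%:Z * (b%:Z + 1)
     - (c%:Z + 1) * (2 * b%:Z + 1) * (8 * a%:Z + 5) ^+ 2).
  by rewrite /Q /quarticC natrD qE natrD !natz intz mE DE pE; ring.
apply: ladic_solvable_Zp => // k k_gt0; exists 1, 1; split; first by rewrite negb_and dvdz1.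
have [y y2] := sqr_ladic_Zp (isT : prime 2) k_gt0 (sqr_ladic_2 mQ).
have m_unit : (m%:R : 'Z_(2 ^ k)) \is a GRing.unit.
  by rewrite unitZpE ?prime_expn_gt1 //; apply: coprimeXl; rewrite coprime2n; lia.
exists ((m%:R)^-1 * y); rewrite -quarticC_int -/Q exprMn y2 rmorphM /=.
by rewrite expr2 !mulrA (mulrV m_unit) mul1r (mulVr m_unit) mul1r.
Qed.

(* For [d = 2 m] take [z0 = z = 1] again: [quarticC = 8 m^2 (1 + 8 v)], so [w = 2 y] with
   [y^2 = m (1 + 8 v)]. *)
Lemma two_adic_solvable_double (p q m e : nat) : (p %% 8 = 7)%N -> q = (p + 2)%N ->
  (m %% 8 = 1)%N -> (e %% 8 = 1 \/ e %% 8 = 7)%N -> ladic_solvable 2 p q (m * e) (2 * m)%N%:Z.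
Proof.
move=> p8 qE m8 e8.
pose a := (p %/ 8)%N; pose b := (e %/ 8)%N; pose c := (m %/ 8)%N.
have pE : p%:Z = 8 * a%:Z + 7 by rewrite /a; lia.
have mE : m%:Z = 8 * c%:Z + 1 by rewrite /c; lia.
pose Q := quarticC (R := int) p q (m * e) (2 * m)%N%:Z 1 1.
have [v QE] : exists v : int, Q = 8 * m%:Z ^+ 2 * (1 + 8 * v).
  case: e8 => e8.
  - have eE : e%:Z = 8 * b%:Z + 1 by rewrite /b; lia.
    exists (4 * b%:Z ^+ 2 + b%:Z - (a%:Z + 1) * e%:Z).
    by rewrite /Q /quarticC natrD qE natrD !natrM !natz intz PoszM pE eE; ring.
  - have eE : e%:Z = 8 * b%:Z + 7 by rewrite /b; lia.
    exists (4 * b%:Z ^+ 2 + 7 * b%:Z + 3 - (a%:Z + 1) * e%:Z).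
    by rewrite /Q /quarticC natrD qE natrD !natrM !natz intz PoszM pE eE; ring.
have mv : (8 %| m%:Z * (1 + 8 * v) - 1)%Z.
  by apply/dvdzP; exists (c%:Z + v + 8 * c%:Z * v); rewrite mE; ring.
apply: ladic_solvable_Zp => // k k_gt0; exists 1, 1; split; first by rewrite negb_and dvdz1.
have [y y2] := sqr_ladic_Zp (isT : prime 2) k_gt0 (sqr_ladic_2 mv).
exists (2 * y); rewrite -quarticC_int -/Q QE exprMn y2.
by rewrite !(rmorphM, rmorphD, rmorphXn) /= ?rmorph0 ?rmorph1; ring.
Qed.

(** * Selmer elements from the primes with [Pi_i = 0] *)

Lemma prod_primes_gt0 (U : seq nat) : all prime U -> (0 < \prod_(x <- U) x)%N.
Proof. by move=> /allP prU; rewrite big_seq_cond prodn_cond_gt0 // => x /andP [/prU /prime_gt0]. Qed.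

Lemma prime_dvd_prod_mem (l : nat) (U : seq nat) : prime l -> all prime U ->
  (l %| \prod_(x <- U) x)%N -> l \in U.
Proof.
move=> pr_l; elim: U => [|x U IH]; first by rewrite big_nil dvdn1 => _ /eqP l1; rewrite l1 in pr_l.
case/andP=> pr_x prU; rewrite big_cons Euclid_dvdM // in_cons => /orP [].
  by rewrite dvdn_prime2 // => ->.
by move/(IH prU) ->; rewrite orbT.
Qed.

Lemma logn_prod_primes (l : nat) (U : seq nat) : prime l -> uniq U -> all prime U ->
  logn l (\prod_(x <- U) x) = (l \in U).
Proof.
move=> pr_l; elim: U => [|x U IH]; first by rewrite big_nil logn1.
case/andP=> xU uU /andP [pr_x prU].
rewrite big_cons (lognM _ (prime_gt0 pr_x) (prod_primes_gt0 prU)) logn_prime // IH // in_cons.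
by case: eqP => [->|] /=; rewrite ?(negbTE xU).
Qed.

Lemma in_QS2_prod (p q : nat) (Ds V : seq nat) : uniq V -> all prime V ->
  {subset V <= Sfin p q Ds} -> in_QS2 p q Ds (\prod_(x <- V) x)%N%:Z.
Proof.
move=> uV prV VS; rewrite /in_QS2 /squarefree /= -lt0n prod_primes_gt0 //=.
apply/andP; split; apply/allP => l; rewrite mem_primes => /and3P [pr_l _ l_dvd].
  by rewrite logn_prod_primes //; case: (l \in V).
by apply/VS/(prime_dvd_prod_mem pr_l prV).
Qed.

Lemma prod_modn_eq1 (U : seq nat) (k : nat) : (1 < k)%N ->
  (forall x, x \in U -> x %% k = 1)%N -> ((\prod_(x <- U) x) %% k = 1)%N.
Proof.
move=> k_gt1; elim: U => [|x U IH] U1; first by rewrite big_nil modn_small.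
rewrite big_cons -modnMm (U1 x (mem_head _ _)) IH ?muln1 ?modn_small // => y yU.
by apply: U1; rewrite in_cons yU orbT.
Qed.

Lemma prod_modn8_pm1 (U : seq nat) : (forall x, x \in U -> x %% 8 = 1 \/ x %% 8 = 7)%N ->
  ((\prod_(x <- U) x) %% 8 = 1 \/ (\prod_(x <- U) x) %% 8 = 7)%N.
Proof.
elim: U => [|x U IH] U8; first by rewrite big_nil; left.
have /IH : (forall y, y \in U -> y %% 8 = 1 \/ y %% 8 = 7)%N.
  by move=> y yU; apply: U8; rewrite in_cons yU orbT.
rewrite big_cons -modnMm.
by case: (U8 x (mem_head _ _)) => -> [] ->; [left|right|right|left].
Qed.

Lemma prodD_split (Ds U : seq nat) : uniq Ds -> uniq U -> {subset U <= Ds} ->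
  prodD Ds = (\prod_(x <- U) x * \prod_(y <- [seq y <- Ds | y \notin U]) y)%N.
Proof.
move=> uDs uU UDs; rewrite /prodD (bigID (fun y => y \in U)) /= big_filter.
congr (_ * _); rewrite -big_filter; apply: perm_big; apply: uniq_perm => //.
  exact: filter_uniq.
by move=> y; rewrite mem_filter; apply/andb_idr/UDs.
Qed.

Definition rho_prime (p q : nat) (Ds : seq nat) (x : nat) : Prop :=
  legendre (-1) x = 1 /\ forall y, y \in [:: p, q & Ds] -> y != x -> legendre y%:Z x = 1.

Section Selmer.
Variables (p q : nat) (Ds : seq nat).
Hypotheses (pr_p : prime p) (pr_q : prime q) (odd_p : odd p) (odd_q : odd q)
  (qE : q = (p + 2)%N) (uniq_Ds : uniq Ds) (prime_Ds : all prime Ds)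
  (Ds_ndvd2 : ~~ (2 %| prodD Ds)%N) (Ds_ndvdp : ~~ (p %| prodD Ds)%N)
  (Ds_ndvdq : ~~ (q %| prodD Ds)%N).

Lemma Ds_facts (y : nat) : y \in Ds -> [/\ prime y, odd y, y != p & y != q].
Proof.
move=> yDs; have y_dvd : (y %| prodD Ds)%N by rewrite /prodD (big_rem y) // dvdn_mulr.
have pr_y : prime y by apply: (allP prime_Ds).
split=> //; last 2 first.
- by apply: contra Ds_ndvdp => /eqP <-.
- by apply: contra Ds_ndvdq => /eqP <-.
by case: (even_prime pr_y) => // y2; move: Ds_ndvd2; rewrite -y2 y_dvd.
Qed.

Lemma odd_prime_place (l : nat) : l \in [:: p, q & Ds] -> prime l /\ odd l.
Proof. by rewrite !in_cons => /or3P [] => [/eqP ->|/eqP ->|/Ds_facts []]. Qed.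

Lemma rho_prime_sqr (x : nat) : x \in Ds -> rho_prime p q Ds x ->
  (x %% 4 = 1)%N /\ forall y, y \in [:: p, q & Ds] -> y != x ->
  sqr_mod x y%:Z /\ sqr_mod y x%:Z.
Proof.
move=> xDs [leg_neg1 leg_y]; have [pr_x odd_x _ _] := Ds_facts xDs.
have x4 : (x %% 4 = 1)%N by apply: sqr_mod_neg1 => //; case: (legendre_eq1 leg_neg1).
split=> // y yS yx; have [pr_y odd_y] := odd_prime_place yS.
have [_ sqr_xy] := legendre_eq1 (leg_y y yS yx).
by split=> //; apply: sqr_mod_reciprocity; rewrite // eq_sym.
Qed.

Section Twist.
Variables (U : seq nat) (c : nat).
Hypotheses (uniq_U : uniq U) (U_Ds : {subset U <= Ds})
  (rho_U : forall x, x \in U -> rho_prime p q Ds x).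
Hypotheses (c12 : (c == 1)%N || (c == 2)%N)
  (sqr_c : forall l, l \in [:: p, q & Ds] -> sqr_mod l c%:Z).

Let m := (\prod_(x <- U) x)%N.

Let prime_U : all prime U.
Proof. by apply/allP => x /U_Ds /Ds_facts []. Qed.

Lemma in_QS2_twist : in_QS2 p q Ds (c * m)%N%:Z.
Proof.
have U_Sfin : {subset U <= Sfin p q Ds} by move=> x /U_Ds xDs; rewrite /Sfin !in_cons xDs !orbT.
case/orP: c12 => /eqP ->; first by rewrite mul1n; apply: in_QS2_prod.
rewrite (_ : (2 * m)%N = \prod_(x <- 2%N :: U) x); last by rewrite big_cons.
apply: in_QS2_prod => /=; rewrite ?prime_U ?uniq_U ?andbT //.
  by apply/negP => /U_Ds /Ds_facts [].
by move=> x; rewrite in_cons => /orP [/eqP ->|/U_Sfin //]; rewrite mem_head.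
Qed.

Let c_coprime (l : nat) : prime l -> odd l -> ~~ (l %| c)%N.
Proof.
move=> pr_l odd_l; case/orP: c12 => /eqP ->.
  by rewrite dvdn1; case: eqP pr_l => // ->.
by rewrite dvdn_prime2 //; case: eqP odd_l => // ->.
Qed.

Lemma ladic_solvable_twist_mem (l : nat) : l \in U ->
  ladic_solvable l p q (prodD Ds) (c * m)%N%:Z.
Proof.
move=> lU; have lDs := U_Ds lU; have [pr_l odd_l lp lq] := Ds_facts lDs.
have [_ sqr_l] := rho_prime_sqr lDs (rho_U lU).
have lS : l \in [:: p, q & Ds] by rewrite !in_cons lDs !orbT.
have prime_e : all prime [seq y <- Ds | y \notin U].
  by apply/allP => y; rewrite mem_filter => /andP [_ /(allP prime_Ds)].
rewrite (prodD_split uniq_Ds uniq_U U_Ds).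
apply: ladic_solvable_twin; rewrite ?c_coprime //; apply: sqr_ladic_odd; rewrite ?dvdzE //=.
- by rewrite dvdn_prime2.
- by apply: (sqr_l p _ _).1; rewrite ?mem_head // eq_sym.
- by rewrite dvdn_prime2.
- by apply: (sqr_l q _ _).1; rewrite ?in_cons ?eqxx ?orbT // eq_sym.
- by apply/negP => /(prime_dvd_prod_mem pr_l prime_e); rewrite mem_filter lU.
- apply: sqr_mod_prod => y; rewrite mem_filter => /andP [yU yDs].
  by apply: (sqr_l y _ _).1; rewrite ?in_cons ?yDs ?orbT //; apply: contraNneq yU => ->.
- exact: c_coprime.
- exact: sqr_c.
Qed.

Lemma ladic_solvable_twist_nmem (l : nat) : l \in [:: p, q & Ds] -> l \notin U ->
  ladic_solvable l p q (prodD Ds) (c * m)%N%:Z.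
Proof.
move=> lS lU; have [pr_l odd_l] := odd_prime_place lS.
apply: ladic_solvable_sqr => //; apply: sqr_ladic_odd => //.
  rewrite dvdzE /= Euclid_dvdM // negb_or c_coprime //=.
  by apply: contra lU; apply: prime_dvd_prod_mem.
rewrite PoszM; apply: sqr_modM; first exact: sqr_c.
apply: sqr_mod_prod => x xU; have [_ sqr_x] := rho_prime_sqr (U_Ds xU) (rho_U xU).
by apply: (sqr_x l lS _).2; apply: contraNneq lU => ->.
Qed.

Lemma in_selmer_twist : ladic_solvable 2 p q (prodD Ds) (c * m)%N%:Z ->
  in_selmer p q Ds (c * m)%N%:Z.
Proof.
move=> sol2; split; first exact: in_QS2_twist; split.
  apply: real_solvable_pos; rewrite ltz_nat muln_gt0 prod_primes_gt0 // andbT.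
  by case/orP: c12 => /eqP ->.
move=> l; rewrite /Sfin in_cons => /orP [/eqP -> //|lS].
have [/ladic_solvable_twist_mem|] := boolP (l \in U); first exact.
exact: ladic_solvable_twist_nmem.
Qed.

End Twist.

Section RhoSubset.
Variable U : seq nat.
Hypotheses (uniq_U : uniq U) (U_Ds : {subset U <= Ds})
  (rho_U : forall x, x \in U -> rho_prime p q Ds x).

Lemma in_selmer_rho : in_selmer p q Ds (\prod_(x <- U) x)%N%:Z.
Proof.
have m4 : ((\prod_(x <- U) x) %% 4 = 1)%N.
  by apply: prod_modn_eq1 => // x xU; case: (rho_prime_sqr (U_Ds xU) (rho_U xU)).
rewrite -[X in X%:Z]mul1n; apply: in_selmer_twist => //; first by move=> l _; apply: sqr_mod1.
rewrite mul1n; have [m1|m5] : ((\prod_(x <- U) x) %% 8 = 1 \/ (\prod_(x <- U) x) %% 8 = 5)%N.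
- by lia.
- apply/ladic_solvable_sqr/sqr_ladic_2 => //; apply/dvdzP; exists (\prod_(x <- U) x %/ 8)%N%:Z.
  by rewrite {1}(divn_eq (\prod_(x <- U) x) 8) m1 PoszD PoszM; ring.
- by apply: two_adic_solvable_5mod8 => //; move: Ds_ndvd2; rewrite dvdn2 negbK.
Qed.

Hypotheses (p8 : (p %% 8 = 7)%N) (Ds8 : all (fun l => (l %% 8 == 1) || (l %% 8 == 7))%N Ds).

Lemma in_selmer_rho_double : in_selmer p q Ds (2 * \prod_(x <- U) x)%N%:Z.
Proof.
have Ds_pm1 y : y \in Ds -> (y %% 8 = 1 \/ y %% 8 = 7)%N.
  by move/(allP Ds8)/orP => [] /eqP ->; [left|right].
apply: in_selmer_twist => //.
  move=> l; rewrite !in_cons => /or3P [] => [/eqP ->|/eqP ->|lDs].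
  - by apply: sqr_mod_two => //; right.
  - by apply: sqr_mod_two => //; left; lia.
  - by apply: sqr_mod_two; [apply: (allP prime_Ds) | apply: Ds_pm1].
rewrite (prodD_split uniq_Ds uniq_U U_Ds); apply: two_adic_solvable_double => //.
  apply: prod_modn_eq1 => // x xU; have [x4 _] := rho_prime_sqr (U_Ds xU) (rho_U xU).
  by case: (Ds_pm1 x (U_Ds xU)); lia.
by apply: prod_modn8_pm1 => y; rewrite mem_filter => /andP [_ /Ds_pm1].
Qed.

End RhoSubset.

End Selmer.

(** * The set [T] and the count [rho^+(D)] *)

Definition rho_set (p q : nat) (Ds : seq nat) : seq nat :=
  [seq nth 0%N Ds (nat_of_ord i) | i <- enum 'I_(size Ds) & @PiPlus p q Ds i == 0].

Lemma subr_legendre_ge0 (a : int) (l : nat) : 0 <= 1 - legendre a l.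
Proof. by rewrite subr_ge0 legendre_le1. Qed.

Lemma PiPlus_ge0 (p q : nat) (Ds : seq nat) (i : 'I_(size Ds)) : 0 <= @PiPlus p q Ds i.
Proof.
rewrite /PiPlus; apply: addr_ge0; last by apply: sumr_ge0 => j _; apply: subr_legendre_ge0.
by apply: addr_ge0; [apply: addr_ge0|]; apply: subr_legendre_ge0.
Qed.

Lemma floor_inv1D (x : int) : 0 <= x -> Num.floor ((1 + x%:~R)^-1 : rat) = (x == 0)%:R.
Proof.
move=> x_ge0; have [->|x_neq0] := eqVneq x 0; first by rewrite rmorph0 addr0 invr1 floor1.
have x1_gt0 : (0 : rat) < 1 + x%:~R by rewrite ltr_wpDr ?ler0z.
apply: floor_def; rewrite /= add0r rmorph0 rmorph1 ltW ?invr_gt0 //= invf_lt1 //.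
by rewrite ltrDl ltr0z lt0r x_neq0.
Qed.

Lemma size_rho_set (p q : nat) (Ds : seq nat) : (size (rho_set p q Ds))%:Z = rhoPlus p q Ds.
Proof.
rewrite /rho_set /rhoPlus size_map size_filter.
under eq_bigr do rewrite floor_inv1D ?PiPlus_ge0 //.
by rewrite -sumMz intz -sum_nat_of_bool big_enum.
Qed.

Lemma uniq_rho_set (p q : nat) (Ds : seq nat) : uniq Ds -> uniq (rho_set p q Ds).
Proof.
move=> uDs; rewrite map_inj_in_uniq; first by apply/filter_uniq/enum_uniq.
by move=> i j _ _ /eqP; rewrite nth_uniq // => /eqP /val_inj.
Qed.

Lemma rho_set_sub (p q : nat) (Ds : seq nat) : {subset rho_set p q Ds <= Ds}.
Proof. by move=> x /mapP [i _ ->]; rewrite mem_nth. Qed.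

(* [Pi_i = 0] forces each of its nonnegative summands [1 - (y/D_i)] to vanish. *)
Lemma rho_set_rho_prime (p q : nat) (Ds : seq nat) (x : nat) :
  x \in rho_set p q Ds -> rho_prime p q Ds x.
Proof.
case/mapP => i; rewrite mem_filter => /andP [Pi0 _] ->{x}; set x := nth 0%N Ds i.
have g := subr_legendre_ge0.
have sum_ge0 : 0 <= \sum_(j < size Ds | j != i) (1 - legendre (nth 0%N Ds j)%:Z x).
  by apply: sumr_ge0 => j _; apply: g.
have g12 := addr_ge0 (g (-1) x) (g p%:Z x); have g123 := addr_ge0 g12 (g q%:Z x).
move: Pi0; rewrite /PiPlus -/x (paddr_eq0 g123 sum_ge0) (paddr_eq0 g12 (g _ _)) paddr_eq0 //.
rewrite !subr_eq0 psumr_eq0; last by move=> j _; apply: g.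
case/andP => /andP [/andP [/eqP leg_neg1 /eqP leg_p] /eqP leg_q] /allP leg_Ds.
split=> // y; rewrite !in_cons => /or3P [] => [/eqP -> //|/eqP -> //|yDs yx].
have j_lt : (index y Ds < size Ds)%N by rewrite index_mem.
have yE : nth 0%N Ds (Ordinal j_lt) = y by rewrite /= nth_index.
have /(_ (mem_index_enum _)) := leg_Ds (Ordinal j_lt).
have -> : Ordinal j_lt != i by apply: contra yx => /eqP ji; rewrite /x -ji yE.
by rewrite /= subr_eq0 yE => /eqP <-.
Qed.

Theorem theorem1p1 (p q : nat) (Ds : seq nat) :
  prime p -> prime q -> odd p -> odd q -> q = (p + 2)%N ->
  uniq Ds -> all prime Ds ->
  ~~ (2 %| prodD Ds)%N -> ~~ (p %| prodD Ds)%N -> ~~ (q %| prodD Ds)%N ->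
  (exists T : seq nat,
     [/\ uniq T, {subset T <= Ds}, (size T)%:Z = rhoPlus p q Ds &
      forall U : seq nat, subseq U T ->
        in_selmer p q Ds (\prod_(l <- U) l)%N%:Z]) /\
  ((p %% 8 = 7)%N -> all (fun l => (l %% 8 == 1) || (l %% 8 == 7))%N Ds ->
   exists T : seq nat,
     [/\ uniq T, {subset T <= Ds}, (size T)%:Z = rhoPlus p q Ds &
      forall U : seq nat, subseq U T ->
        in_selmer p q Ds (\prod_(l <- U) l)%N%:Z /\
        in_selmer p q Ds (2 * \prod_(l <- U) l)%N%:Z]).
Proof.
move=> pr_p pr_q odd_p odd_q qE uniq_Ds prime_Ds ndvd2 ndvdp ndvdq.
have uniq_T := uniq_rho_set p q uniq_Ds.
have sub_T U : subseq U (rho_set p q Ds) ->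
    [/\ uniq U, {subset U <= Ds} & forall x, x \in U -> rho_prime p q Ds x].
  move=> UT; split; first exact: subseq_uniq UT uniq_T.
    by move=> x /(mem_subseq UT) /rho_set_sub.
  by move=> x /(mem_subseq UT) /rho_set_rho_prime.
have selmer U : subseq U (rho_set p q Ds) -> in_selmer p q Ds (\prod_(l <- U) l)%N%:Z.
  by case/sub_T => uU UDs rhoU; apply: in_selmer_rho.
split; first by exists (rho_set p q Ds); split; rewrite ?size_rho_set //; apply: rho_set_sub.
move=> p8 Ds8; exists (rho_set p q Ds); split; rewrite ?size_rho_set //; first exact: rho_set_sub.
move=> U UT; split; first exact: selmer.
by case/sub_T: UT => uU UDs rhoU; apply: in_selmer_rho_double.
Qed.
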